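(* Let $G$ be a finite simple graph with at least one edge such that $\chi(G) > \frac{\Delta(G)}{2} + 1$. Then ${\rm vs}_{\chi}(G) = {\rm es}_{\chi}(G)$.
   Context: $\chi(G)$ is the chromatic number and $\Delta(G)$ the maximum degree of $G$. The chromatic vertex stability number ${\rm vs}_{\chi}(G)$ is the minimum number of vertices of $G$ whose deletion results in a graph $H$ with $\chi(H) = \chi(G)-1$. The chromatic edge stability number ${\rm es}_{\chi}(G)$ is the minimum number of edges of $G$ whose deletion results in a graph $H$ with $\chi(H) = \chi(G)-1$. *)

From mathcomp Require Import all_boot.
Set Implicit Arguments. Unset Strict Implicit. Unset Printing Implicit Defensive.

Section Graphs.
Variable T : finType.

Definition simple_graph (e : rel T) := irreflexive e /\ symmetric e.

Definition colorable (r : rel T) (V : {set T}) (k : nat) : bool :=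
  [exists f : {ffun T -> 'I_k}, [forall x in V, forall y in V, r x y ==> (f x != f y)]].

Definition chi (r : rel T) (V : {set T}) : nat :=
  \big[minn/#|V|]_(k < #|V|.+1 | colorable r V k) k.

Definition Delta (e : rel T) : nat := \max_(x : T) #|[set y | e x y]|.

Definition edges (e : rel T) : {set {set T}} :=
  [set [set p.1; p.2] | p in [set p : T * T | e p.1 p.2]].

Definition del_edges (e : rel T) (F : {set {set T}}) : rel T :=
  fun x y => e x y && ([set x; y] \notin F).

Definition vs_chi (e : rel T) : nat :=
  \big[minn/#|T|.+1]_(S : {set T} |
     chi e (~: S) == (chi e [set: T]).-1) #|S|.

Definition es_chi (e : rel T) : nat :=
  \big[minn/#|edges e|.+1]_(F : {set {set T}} |
     (F \subset edges e) && (chi (del_edges e F) [set: T] == (chi e [set: T]).-1))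
     #|F|.
End Graphs.

From mathcomp Require Import all_boot order zify.
Set Implicit Arguments. Unset Strict Implicit. Unset Printing Implicit Defensive.
Import Order.TTheory.

(* Write k = chi(G) - 1.  Deleting one vertex, or putting back one deleted edge,
   raises the chromatic number by at most one; hence every vertex or edge set
   whose deletion brings the chromatic number down to at most k contains one
   bringing it down to exactly k, and it suffices to compare sizes.
   Deleting one endpoint of each edge of an edge set F leaves a subgraph of
   G - F, so vs <= es.  Conversely, start from a k-colouring of G - S and put
   the vertices of S back one at a time: a vertex has at most Delta < 2k
   neighbours, so some colour occurs at most once among them; the vertex takes
   that colour and the edge to the conflicting neighbour (if any) is deleted.
   This deletes at most |S| edges, so es <= vs. *)

Section Colouring.
Variable T : finType.
Implicit Types (r : rel T) (V : {set T}) (k : nat).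

Lemma colorableP r V k :
  reflect (exists f : T -> 'I_k, {in V &, forall x y, r x y -> f x != f y})
          (colorable r V k).
Proof.
apply: (iffP existsP) => [[f /forallP Hf]|[f Hf]].
  exists f => x y Vx Vy rxy.
  by move: (Hf x); rewrite Vx => /forallP/(_ y); rewrite Vy rxy.
exists (finfun f); apply/forall_inP => x Vx; apply/forall_inP => y Vy.
by apply/implyP; rewrite !ffunE; apply: Hf.
Qed.

Lemma colorable_sub r r' V V' k : V' \subset V ->
  {in V' &, forall x y, r' x y -> r x y} -> colorable r V k -> colorable r' V' k.
Proof.
move=> /subsetP sV' r'r /colorableP [f Hf]; apply/colorableP; exists f.
by move=> x y V'x V'y /(r'r x y V'x V'y); apply: Hf; apply: sV'.
Qed.

Lemma colorable_widen r V k k' : k <= k' -> colorable r V k -> colorable r V k'.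
Proof.
move=> le_kk' /colorableP [f Hf]; apply/colorableP.
by exists (widen_ord le_kk' \o f) => x y Vx Vy /(Hf x y Vx Vy); rewrite -!val_eqE.
Qed.

Lemma colorable_fresh_colour r r' V a k : irreflexive r' ->
  (forall x y, x != a -> y != a -> r' x y -> r x y) ->
  colorable r (V :\ a) k -> colorable r' V k.+1.
Proof.
move=> irr' r'r /colorableP [f Hf]; apply/colorableP.
exists (fun x => if x == a then ord_max else lift ord_max (f x)) => x y Vx Vy r'xy.
have [xa | xa] := eqVneq x a; have [ya | ya] := eqVneq y a.
- by rewrite xa ya irr' in r'xy.
- exact: neq_lift.
- by rewrite eq_sym neq_lift.
- by rewrite (inj_eq lift_inj) Hf ?inE ?xa ?ya ?r'r.
Qed.

Lemma chi_le_card r V : chi r V <= #|V|.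
Proof.
apply: (big_ind (fun n => n <= #|V|)) => // [m n le_m _ | i _].
  by rewrite geq_min le_m.
by rewrite -ltnS.
Qed.

Lemma chi_le r V k : colorable r V k -> chi r V <= k.
Proof.
move=> colk; have [le_kV | lt_Vk] := leqP k #|V|.
  by apply: (@bigmin_le_cond _ nat _ _ (Ordinal (le_kV : k < #|V|.+1))).
exact: leq_trans (chi_le_card r V) (ltnW lt_Vk).
Qed.

Lemma chi_colorable r V : irreflexive r -> V != set0 -> colorable r V (chi r V).
Proof.
move=> irr /set0Pn [x0 Vx0]; apply: (big_ind (colorable r V)) => //.
- apply/colorableP; exists (enum_rank_in Vx0) => x y Vx Vy.
  by apply: contraL => /eqP/(enum_rank_in_inj Vx Vy) ->; rewrite irr.
- by move=> m n colm coln; rewrite /minn; case: ifP.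
Qed.

(* [0 < k] is needed: [chi r set0 = 0], while [colorable r set0 0] fails as
   soon as [T] is inhabited. *)
Lemma chi_leP r V k : irreflexive r -> 0 < k -> (chi r V <= k) = colorable r V k.
Proof.
move=> irr k_gt0; apply/idP/idP => [le_chi_k | /chi_le //].
have [-> | V0] := eqVneq V set0.
  by apply/colorableP; exists (fun=> Ordinal k_gt0) => x y; rewrite inE.
exact: colorable_widen le_chi_k (chi_colorable irr V0).
Qed.

Lemma chi_ext r r' V : r =2 r' -> chi r V = chi r' V.
Proof.
move=> rr'; apply: eq_bigl => k; apply/idP/idP;
  by apply: colorable_sub => // x y _ _; rewrite rr'.
Qed.

Lemma chi_gt1 r x y : irreflexive r -> r x y -> 1 < chi r [set: T].
Proof.
move=> irr rxy; rewrite ltnNge chi_leP //; apply/colorableP => -[f Hf].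
by move: (Hf x y (in_setT x) (in_setT y) rxy); rewrite [f x]ord1 [f y]ord1.
Qed.

Lemma chi_delete_vertex r V a : irreflexive r -> chi r V <= (chi r (V :\ a)).+1.
Proof.
move=> irr; have [Va0 | Va] := eqVneq (V :\ a) set0.
  apply: leq_trans (chi_le_card r V) _.
  by rewrite (cardsD1 a V) Va0 cards0 addn0; case: (a \in V).
by apply/chi_le/(colorable_fresh_colour irr _ (chi_colorable irr Va)).
Qed.

End Colouring.

Lemma ivt_subset (X : finType) (phi : {set X} -> nat) (D : {set X}) m :
  (forall (A : {set X}) x, A \subset D -> x \in A -> phi (A :\ x) <= (phi A).+1) ->
  m < phi set0 -> forall A : {set X}, A \subset D -> phi A <= m ->
  exists2 B : {set X}, B \subset A & phi B = m.
Proof.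
move=> step lt_m0 A AD leAm.
pose P (B : {set X}) := (B \subset A) && (phi B <= m).
have PA : P A by rewrite /P subxx leAm.
have [B /andP [BA leBm] minB] := arg_minnP (fun B : {set X} => #|B|) PA.
exists B => //; apply/eqP; rewrite eqn_leq leBm leqNgt; apply/negP => ltBm.
have [B0 | [x Bx]] := set_0Vmem B; first by rewrite B0 ltnNge (ltnW lt_m0) in ltBm.
have /minB : P (B :\ x).
  rewrite /P (subset_trans (subD1set B x) BA).
  exact: leq_trans (step B x (subset_trans BA AD) Bx) ltBm.
by rewrite (cardsD1 x B) Bx ltnn.
Qed.

Section EdgeDeletion.
Variables (T : finType) (e : rel T).
Hypothesis irr : irreflexive e.
Implicit Types (S : {set T}) (F : {set {set T}}).

Lemma mem_edges x y : e x y -> [set x; y] \in edges e.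
Proof. by move=> exy; apply/imsetP; exists (x, y); rewrite ?inE. Qed.

Lemma del_edgesS F F' : F \subset F' -> subrel (del_edges e F') (del_edges e F).
Proof.
move=> /subsetP FF' x y /andP [exy notF']; rewrite /del_edges exy.
by apply: contra notF' => /FF'.
Qed.

Lemma colorable_del_vertices (x0 : T) k F :
  colorable (del_edges e F) [set: T] k ->
  exists S : {set T}, #|S| <= #|F| /\ colorable e (~: S) k.
Proof.
pose pt (g : {set T}) := odflt x0 [pick x in g].
move=> colF; exists (pt @: F); split; first exact: leq_imset_card.
apply: colorable_sub (subsetT _) _ colF => x y; rewrite !inE => Sx Sy exy.
rewrite /del_edges exy; apply: contraNN Sx => Fxy.
have : pt [set x; y] \in [set x; y].
  by rewrite /pt; case: pickP => [//|/(_ x)]; rewrite !inE eqxx.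
rewrite !inE => /orP [] /eqP ptxy; last by rewrite -ptxy imset_f in Sy.
by rewrite -ptxy imset_f.
Qed.

Lemma irr_del_edges F : irreflexive (del_edges e F).
Proof. by move=> x; rewrite /del_edges irr. Qed.

Lemma sym_del_edges F : symmetric e -> symmetric (del_edges e F).
Proof. by move=> sym x y; rewrite /del_edges sym setUC. Qed.

Lemma del_edges0 : del_edges e set0 =2 e.
Proof. by move=> x y; rewrite /del_edges inE andbT. Qed.

Lemma chi_restore_edge F g : g \in edges e ->
  chi (del_edges e (F :\ g)) [set: T] <= (chi (del_edges e F) [set: T]).+1.
Proof.
case/imsetP=> [[a b] _ ->].
have colF : colorable (del_edges e F) ([set: T] :\ a) (chi (del_edges e F) [set: T]).
  apply: colorable_sub (subsetT _) _ (chi_colorable (irr_del_edges F) _) => //.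
  by apply/set0Pn; exists a.
apply/chi_le/(colorable_fresh_colour (irr_del_edges _) _ colF) => x y xa ya.
rewrite /del_edges !inE => /andP [-> /=]; rewrite negb_and => /orP [] //.
rewrite negbK => /eqP/setP/(_ a); rewrite !inE eqxx.
by rewrite ![a == _]eq_sym (negbTE xa) (negbTE ya).
Qed.

Lemma vertex_stable_subset S k : k < chi e [set: T] -> chi e (~: S) <= k ->
  exists2 S' : {set T}, S' \subset S & chi e (~: S') = k.
Proof.
move=> lt_k; apply: (ivt_subset (phi := fun S => chi e (~: S))) (subsetT S);
  last by rewrite setC0.
move=> A x _ Ax; rewrite (_ : ~: A = ~: (A :\ x) :\ x).
  exact: chi_delete_vertex.
by apply/setP => y; rewrite !inE; case: eqP => [->|]; rewrite ?Ax.
Qed.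

Lemma edge_stable_subset F k : k < chi e [set: T] -> F \subset edges e ->
  chi (del_edges e F) [set: T] <= k ->
  exists2 F' : {set {set T}}, F' \subset F & chi (del_edges e F') [set: T] = k.
Proof.
move=> lt_k; apply: ivt_subset => [A g Ae Ag | ].
  exact/chi_restore_edge/(subsetP Ae).
by rewrite (chi_ext _ del_edges0).
Qed.

End EdgeDeletion.

Lemma exists_fibre_card_le1 (T : finType) (N : {set T}) k (c : T -> 'I_k) :
  #|N| < k.*2 -> exists i, #|[set y in N | c y == i]| <= 1.
Proof.
move=> ltNk; apply/existsP; apply: contraLR ltNk; rewrite negb_exists -leqNgt.
move=> /forallP big_fibres.
have -> : #|N| = \sum_(i < k) #|[set y in N | c y == i]|.
  rewrite -sum1_card (partition_big c predT) //=; apply: eq_bigr => i _.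
  by rewrite -sum1_card; apply: eq_bigl => y; rewrite !inE.
rewrite -muln2 -[k in k * 2]card_ord -sum_nat_const.
by apply: leq_sum => i _; rewrite ltnNge big_fibres.
Qed.

Lemma card_nbhd_le_Delta (T : finType) (e : rel T) v (S : {set T}) :
  S \subset [set y | e v y] -> #|S| <= Delta e.
Proof.
move=> /subset_leq_card le_S; apply: leq_trans le_S _.
exact: (@leq_bigmax _ (fun x => #|[set y | e x y]|)).
Qed.

Section Recolouring.
Variables (T : finType) (e : rel T).
Hypotheses (irr : irreflexive e) (sym : symmetric e).
Implicit Types (S : {set T}) (F : {set {set T}}).

Lemma recolour_vertex k F0 S v : Delta e < k.*2 -> F0 \subset edges e -> v \in S ->
  colorable (del_edges e F0) (~: S) k ->
  exists F1, [/\ F1 \subset edges e, #|F1| <= #|F0|.+1 &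
                 colorable (del_edges e F1) (~: (S :\ v)) k].
Proof.
move=> ltDk F0e Sv /colorableP [c colc].
pose N := [set y in ~: S | del_edges e F0 v y].
have [i le1_Ni] : exists i, #|[set y in N | c y == i]| <= 1.
  apply/exists_fibre_card_le1/(leq_ltn_trans _ ltDk)/(card_nbhd_le_Delta (v := v)).
  by apply/subsetP => y; rewrite !inE => /andP [_ /andP [-> _]].
pose F1 := F0 :|: [set [set v; y] | y in [set y in N | c y == i]].
have F0F1 : F0 \subset F1 by apply: subsetUl.
exists F1; split.
- rewrite subUset F0e; apply/subsetP => _ /imsetP [y Ny ->]; apply: mem_edges.
  by move: Ny; rewrite !inE => /andP [/andP [_ /andP [-> _]] _].
- rewrite cardsU (leq_trans (leq_subr _ _)) // -addn1 leq_add2l.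
  exact: leq_trans (leq_imset_card _ _) le1_Ni.
have outS x : x \in ~: (S :\ v) -> x != v -> x \in ~: S.
  by rewrite !inE negb_and negbK => /orP [-> | ->].
have avoid_i y : y \in ~: S -> del_edges e F1 v y -> c y != i.
  move=> Sy F1vy; apply/eqP => cyi.
  have F1_vy : [set v; y] \in F1.
    rewrite inE; apply/orP; right; apply/imsetP; exists y => //.
    by rewrite !inE cyi eqxx andbT -in_setC Sy (del_edgesS F0F1 F1vy).
  by move: F1vy; rewrite /del_edges F1_vy andbF.
apply/colorableP; exists (fun x => if x == v then i else c x) => x y Sx Sy F1xy.
have [xv | xv] := eqVneq x v; have [yv | yv] := eqVneq y v.
- by rewrite xv yv /del_edges irr in F1xy.
- by rewrite eq_sym; apply: avoid_i; rewrite -?xv ?outS.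
- by apply: avoid_i; rewrite -?yv ?outS // (sym_del_edges _ sym).
- by apply: colc; rewrite ?outS ?(del_edgesS F0F1).
Qed.

Lemma colorable_del_edges k F0 S : Delta e < k.*2 -> F0 \subset edges e ->
  colorable (del_edges e F0) (~: S) k ->
  exists F, [/\ F \subset edges e, #|F| <= #|F0| + #|S| &
                colorable (del_edges e F) [set: T] k].
Proof.
move=> ltDk; elim: {S}#|S| {-2}S (erefl #|S|) F0 => [|n IH] S cardS F0 F0e colF0.
  exists F0; split=> //; first exact: leq_addr.
  by rewrite -setC0 -(cards0_eq cardS).
have [v Sv] : exists v, v \in S by apply/card_gt0P; rewrite cardS.
have [F1 [F1e cardF1 colF1]] := recolour_vertex ltDk F0e Sv colF0.
have cardSv : #|S :\ v| = n by move: cardS; rewrite (cardsD1 v S) Sv => -[].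
have [F [Fe cardF colF]] := IH (S :\ v) cardSv F1 F1e colF1.
exists F; split=> //; apply: leq_trans cardF _.
by rewrite (cardsD1 v S) Sv cardSv addnS -addSn leq_add2r.
Qed.

End Recolouring.

Section Stability.
Variables (T : finType) (e : rel T).
Hypotheses (irr : irreflexive e) (sym : symmetric e).
Hypothesis one_lt_chi : 1 < chi e [set: T].
Implicit Types (S : {set T}) (F : {set {set T}}).
Local Notation k := (chi e [set: T]).-1.

Let k_gt0 : 0 < k. Proof. by rewrite -ltnS prednK // ltnW. Qed.
Let lt_k_chi : k < chi e [set: T]. Proof. by rewrite prednK // ltnW. Qed.

Lemma vs_chi_le_card F : chi (del_edges e F) [set: T] <= k -> vs_chi e <= #|F|.
Proof.
rewrite (chi_leP _ (irr_del_edges irr F) k_gt0) => colF.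
have /card_gt0P [x0 _] : 0 < #|T|.
  by rewrite -cardsT; apply: leq_trans (ltnW one_lt_chi) (chi_le_card _ _).
have [S [cardS colS]] := colorable_del_vertices x0 colF.
have [S' S'S chiS'] := vertex_stable_subset irr lt_k_chi (chi_le colS).
apply: leq_trans (leq_trans (subset_leq_card S'S) cardS).
by apply: (@bigmin_le_cond _ nat); rewrite chiS'.
Qed.

Lemma es_chi_le_card S : Delta e < k.*2 -> chi e (~: S) <= k -> es_chi e <= #|S|.
Proof.
rewrite chi_leP // => ltDk colS.
have colS0 : colorable (del_edges e set0) (~: S) k.
  by apply: colorable_sub colS => // x y _ _; rewrite del_edges0.
have [F [Fe cardF colF]] := colorable_del_edges irr sym ltDk (sub0set _) colS0.
have [F' F'F chiF'] := edge_stable_subset irr lt_k_chi Fe (chi_le colF).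
rewrite cards0 in cardF; apply: leq_trans (leq_trans (subset_leq_card F'F) cardF).
by apply: (@bigmin_le_cond _ nat); rewrite chiF' (subset_trans F'F Fe) eqxx.
Qed.

Lemma vs_chi_le_es_chi : vs_chi e <= es_chi e.
Proof.
apply/(@bigmin_geP _ nat); split=> [|F /andP [_ /eqP chiF]]; last first.
  by apply: vs_chi_le_card; rewrite chiF.
(* the default [#|edges e|.+1] of the minimum: deleting all edges leaves a
   1-colourable graph *)
apply/(leq_trans _ (leqnSn _))/vs_chi_le_card/(leq_trans _ k_gt0)/chi_le.
apply/colorableP; exists (fun=> ord0) => x y _ _ /andP [/mem_edges exy].
by rewrite exy.
Qed.

Lemma es_chi_le_vs_chi : Delta e < k.*2 -> es_chi e <= vs_chi e.
Proof.
move=> ltDk; apply/(@bigmin_geP _ nat); split=> [|S /eqP chiS]; last first.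
  by apply: es_chi_le_card; rewrite ?chiS.
have chi0 : chi e (~: [set: T]) <= k.
  by rewrite setCT (leq_trans (chi_le_card _ _)) ?cards0.
by apply: leq_trans (es_chi_le_card ltDk chi0) _; rewrite cardsT.
Qed.

End Stability.

Theorem theorem4 (T : finType) (e : rel T) :
  simple_graph e ->
  (exists x y, e x y) ->
  (* chi(G) > Delta(G)/2 + 1, i.e. 2 chi(G) > Delta(G) + 2 *)
  Delta e + 2 < 2 * chi e [set: T] ->
  vs_chi e = es_chi e.
Proof.
move=> [irr sym] [x [y exy]] ltDchi.
have one_lt_chi := chi_gt1 irr exy.
have ltDk : Delta e < (chi e [set: T]).-1.*2 by rewrite -muln2; lia.
by apply/eqP; rewrite eqn_leq vs_chi_le_es_chi ?es_chi_le_vs_chi.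
Qed.
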